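(* There is no LCL problem on paths with mending radius between $\omega(1)$ and $o(n)$: if an LCL problem $\Pi$ on the family of all paths is $T$-mendable for some function $T$ with $T(n)=o(n)$, then $\Pi$ is $T'$-mendable for some constant function $T'$.
   Context: A locally verifiable problem $\Pi$ on a graph family $\mathcal{G}$ is given by a set $\Sigma$ of input labels, a set $\Gamma$ of output labels and a verifier $\psi$ with verification radius $r$: $\psi(G,\lambda,v)\in\{\text{happy},\text{unhappy}\}$ depends only on the radius-$r$ neighborhood of $v$ (structure, inputs and outputs, up to isomorphism); $\lambda:V\to\Gamma$ is a solution if $\psi$ is happy everywhere. $\Pi$ is an LCL problem if $\Sigma,\Gamma$ are finite and all graphs in $\mathcal{G}$ have maximum degree bounded by a constant. Partial labelings are maps $\lambda:V\to\Gamma\cup\{\bot\}$; the relaxed verifier $\psi^*$ is happy at $v$ if some node within distance $r$ of $v$ has label $\bot$, and otherwise $\psi^*(G,\lambda,v)=\psi(G,\lambda',v)$ for any $\lambda':V\to\Gamma$ agreeing with $\lambda$ on the radius-$r$ neighborhood of $v$; $\psi^*$ accepts $\lambda$ if happy everywhere. Given $\lambda$ accepted by $\psi^*$ and node $v$, a $t$-mend of $\lambda$ at $v$ is a partial labeling $\mu$ accepted by $\psi^*$ with $\mu(v)\neq\bot$, $\mu(u)=\bot\Rightarrow\lambda(u)=\bot$, and $\mu(u)\neq\lambda(u)\Rightarrow\mathrm{dist}(u,v)\le t$. A verifier is $T$-mendable if for every $G\in\mathcal{G}$ with $n$ nodes, every $\lambda$ accepted by $\psi^*$ and every node $v$, a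 $T(n)$-mend at $v$ exists; $\Pi$ is $T$-mendable if some radius-$r$ verifier for $\Pi$ (accepting exactly the solutions of $\Pi$) is $T$-mendable. *)

From mathcomp Require Import all_boot.
Set Implicit Arguments. Unset Strict Implicit. Unset Printing Implicit Defensive.

(* A path with n nodes is represented (up to isomorphism) by the vertex set
   'I_n with edges {i, i+1}.  Distance in the path is |u - v|. *)
Definition pdist n (u v : 'I_n) : nat := (u - v) + (v - u).

Definition padj n (u v : 'I_n) : bool := (u.+1 == v :> nat) || (v.+1 == u :> nat).

(* A verifier: given a path with n nodes, an input labeling, an output
   labeling and a node, returns happy (true) / unhappy (false). *)
Definition verifier (Sigma Gamma : Type) :=
  forall n : nat, ('I_n -> Sigma) -> ('I_n -> Gamma) -> 'I_n -> bool.

Definition ball_iso (Sigma Gamma : Type) (r : nat)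
  n (x : 'I_n -> Sigma) (y : 'I_n -> Gamma) (v : 'I_n)
  n' (x' : 'I_n' -> Sigma) (y' : 'I_n' -> Gamma) (v' : 'I_n')
  (f : 'I_n -> 'I_n') : Prop :=
  f v = v' /\
  [/\ (forall u, pdist u v <= r -> pdist (f u) v' <= r),
      (forall u1 u2, pdist u1 v <= r -> pdist u2 v <= r -> f u1 = f u2 -> u1 = u2),
      (forall w, pdist w v' <= r -> exists2 u, pdist u v <= r & f u = w),
      (forall u1 u2, pdist u1 v <= r -> pdist u2 v <= r ->
          padj (f u1) (f u2) = padj u1 u2)
    & (forall u, pdist u v <= r -> x' (f u) = x u /\ y' (f u) = y u)].

Definition local_verifier (Sigma Gamma : Type) (r : nat)
  (psi : verifier Sigma Gamma) : Prop :=
  forall n x y v n' x' y' v' (f : 'I_n -> 'I_n'),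
    @ball_iso Sigma Gamma r n x y v n' x' y' v' f ->
    psi n x y v = psi n' x' y' v'.

Definition same_solutions (Sigma Gamma : Type) (psi psi' : verifier Sigma Gamma) : Prop :=
  forall n (x : 'I_n -> Sigma) (y : 'I_n -> Gamma),
    (forall v, psi n x y v) <-> (forall v, psi' n x y v).

(* Partial labelings: None plays the role of bottom. *)
Definition relaxed_happy (Sigma Gamma : Type) (r : nat) (psi : verifier Sigma Gamma)
  n (x : 'I_n -> Sigma) (lam : 'I_n -> option Gamma) (v : 'I_n) : Prop :=
  (exists2 u, pdist u v <= r & lam u = None) \/
  (forall lam' : 'I_n -> Gamma,
     (forall u, pdist u v <= r -> lam u = Some (lam' u)) -> psi n x lam' v).

Definition relaxed_accepts (Sigma Gamma : Type) (r : nat) (psi : verifier Sigma Gamma)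
  n (x : 'I_n -> Sigma) (lam : 'I_n -> option Gamma) : Prop :=
  forall v, relaxed_happy r psi x lam v.

Definition is_mend (Sigma Gamma : Type) (r : nat) (psi : verifier Sigma Gamma)
  n (x : 'I_n -> Sigma) (lam mu : 'I_n -> option Gamma) (v : 'I_n) (t : nat) : Prop :=
  [/\ relaxed_accepts r psi x mu,
      mu v <> None,
      (forall u, mu u = None -> lam u = None)
    & (forall u, mu u <> lam u -> pdist u v <= t)].

Definition verifier_mendable (Sigma Gamma : Type) (r : nat) (psi : verifier Sigma Gamma)
  (T : nat -> nat) : Prop :=
  forall n (x : 'I_n -> Sigma) (lam : 'I_n -> option Gamma) (v : 'I_n),
    relaxed_accepts r psi x lam ->
    exists mu, is_mend r psi x lam mu v (T n).

Definition problem_mendable (Sigma Gamma : Type) (r : nat) (psi : verifier Sigma Gamma)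
  (T : nat -> nat) : Prop :=
  exists psi' : verifier Sigma Gamma,
    [/\ local_verifier r psi', same_solutions psi psi' & verifier_mendable r psi' T].

Definition little_o_n (T : nat -> nat) : Prop :=
  forall k, 0 < k -> exists N, forall n, N <= n -> k * T n <= n.

From mathcomp Require Import all_boot zify.
Set Implicit Arguments. Unset Strict Implicit.

(* To mend at v, cut the window [v - L, v + L] out of the path as a path of
   its own, putting bottom on its end nodes that have neighbours outside; the
   restricted labelling stays feasible there. The window has at most 2L + 1
   nodes, so for L large compared with the threshold of T(n) <= n/4 and with r,
   a T-mend inside it only changes nodes far from the cut ends (if the window
   is too small for that bound, it is the whole path and has no cut ends).
   Pasting this mend back is feasible everywhere, since the radius-r view of
   every node either lies inside the window away from the cut ends or is left
   untouched. This is an L-mend, with L independent of n. *)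

Lemma pdistC n (u v : 'I_n) : pdist u v = pdist v u.
Proof. by rewrite /pdist addnC. Qed.

Section PathSegment.

Variables (n a m : nat).
Hypothesis Ham : a + m <= n.

Lemma seg_embed_subproof (j : 'I_m) : a + j < n.
Proof. by apply: leq_trans Ham; rewrite ltn_add2l. Qed.

Definition seg_embed (j : 'I_m) : 'I_n := Ordinal (seg_embed_subproof j).

Lemma pdist_seg_embed j k : pdist (seg_embed j) (seg_embed k) = pdist j k.
Proof. by rewrite /pdist /= !subnDl. Qed.

Lemma seg_embed_inj : injective seg_embed.
Proof. by move=> j k /(congr1 val) /addnI /val_inj. Qed.

Definition seg_cut (j : 'I_m) : bool :=
  ((j == 0 :> nat) && (0 < a)) || ((j.+1 == m) && (a + m < n)).

Lemma seg_cut_near (u : 'I_n) (j : 'I_m) :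
  (forall k, seg_embed k = u -> seg_cut k) ->
  exists2 c, seg_cut c & pdist j c <= pdist (seg_embed j) u.
Proof.
case: (pickP (fun k => seg_embed k == u)) => [k /eqP <- /(_ k erefl) Hk|Hout _].
  by exists k; rewrite ?pdist_seg_embed.
have Hm : 0 < m by case: j => j /= Hj; lia.
case: (ltnP u a) => Hua.
  exists (Ordinal Hm); first by rewrite /seg_cut /=; lia.
  rewrite /pdist /=; lia.
have Hu : a + m <= u.
  rewrite leqNgt; apply/negP => Hu.
  have Hk : u - a < m by lia.
  by have := Hout (Ordinal Hk); rewrite -(inj_eq val_inj) /= subnKC // eqxx.
have Hm1 : m.-1 < m by lia.
exists (Ordinal Hm1); first by rewrite /seg_cut /=; have := ltn_ord u; lia.
have := ltn_ord j; rewrite /pdist /=; lia.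
Qed.

Section SegmentLabelings.

Variables (Sigma : Type) (Gamma : eqType) (r : nat) (psi : verifier Sigma Gamma).
Hypothesis Hloc : local_verifier r psi.

Lemma relaxed_happy_ball_eq (x : 'I_n -> Sigma) (lam lam' : 'I_n -> option Gamma) w :
  (forall u, pdist u w <= r -> lam u = lam' u) ->
  relaxed_happy r psi x lam w -> relaxed_happy r psi x lam' w.
Proof.
move=> E [[u Hu Hn]|H]; first by left; exists u; rewrite -?E.
by right=> lam1 Hl; apply: H => u Hu; rewrite E ?Hl.
Qed.

Lemma relaxed_happy_seg_embed (x : 'I_n -> Sigma)
    (mu : 'I_m -> option Gamma) (lam : 'I_n -> option Gamma) (i : 'I_m) :
  (forall w, pdist w (seg_embed i) <= r -> exists k, seg_embed k = w) ->
  (forall j, pdist j i <= r -> mu j = lam (seg_embed j)) ->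
  relaxed_happy r psi (x \o seg_embed) mu i <-> relaxed_happy r psi x lam (seg_embed i).
Proof.
move=> Hcov Hlab.
have Hball w : pdist w (seg_embed i) <= r -> exists2 k, pdist k i <= r & seg_embed k = w.
  by move=> Hw; have [k Hk] := Hcov w Hw; exists k; rewrite -?pdist_seg_embed ?Hk.
have Hpsi (Y : 'I_m -> Gamma) (Z : 'I_n -> Gamma) :
    (forall j, pdist j i <= r -> Z (seg_embed j) = Y j) ->
    psi x Z (seg_embed i) = psi (x \o seg_embed) Y i.
  move=> HZ; symmetry; apply: (Hloc (f := seg_embed)); split=> //; split.
  - by move=> u; rewrite pdist_seg_embed.
  - by move=> u1 u2 _ _ /seg_embed_inj.
  - exact: Hball.
  - by move=> u1 u2 _ _; rewrite /padj /= -!addnS !eqn_add2l.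
  - by move=> u Hu; rewrite HZ.
split=> [[[u Hu Hn]|H]|[[w Hw Hn]|H]].
- by left; exists (seg_embed u); rewrite ?pdist_seg_embed -?Hlab.
- right=> Z HZ; rewrite (Hpsi (Z \o seg_embed)) //; apply: H => u Hu.
  by rewrite Hlab ?HZ ?pdist_seg_embed.
- by left; have [u Hu Hfu] := Hball _ Hw; exists u; rewrite ?Hlab ?Hfu.
- right=> Y HY; pose Z w := if [pick k | seg_embed k == w] is Some k then Y k else Y i.
  have HZ j : Z (seg_embed j) = Y j.
    by rewrite /Z; case: pickP => [k /eqP /seg_embed_inj -> //|/(_ j)]; rewrite eqxx.
  rewrite -(Hpsi Y Z) //; apply: H => w Hw; have [u Hu <-] := Hball w Hw.
  by rewrite HZ -Hlab ?HY.
Qed.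

Definition seg_restrict (lam : 'I_n -> option Gamma) (j : 'I_m) : option Gamma :=
  if seg_cut j then None else lam (seg_embed j).

Lemma relaxed_accepts_seg_restrict x lam :
  relaxed_accepts r psi x lam ->
  relaxed_accepts r psi (x \o seg_embed) (seg_restrict lam).
Proof.
move=> Hacc i.
case: (boolP [exists c, seg_cut c && (pdist c i <= r)]) => [/existsP[c /andP[Hc Hci]]|Hfar].
  by left; exists c; rewrite // /seg_restrict Hc.
have {}Hfar c : seg_cut c -> r < pdist c i.
  by move=> Hc; move/existsPn/(_ c): Hfar; rewrite Hc ltnNge.
have Hcov w : pdist w (seg_embed i) <= r -> exists k, seg_embed k = w.
  move=> Hw; case: (pickP (fun k => seg_embed k == w)) => [k /eqP|Hout]; first by exists k.
  have Hno k : seg_embed k = w -> seg_cut k by move/eqP; rewrite Hout.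
  have [c Hc] := seg_cut_near i Hno.
  by rewrite pdistC (pdistC (seg_embed i)) => /leq_trans/(_ Hw); rewrite leqNgt Hfar.
have Hlab j : pdist j i <= r -> seg_restrict lam j = lam (seg_embed j).
  by rewrite /seg_restrict; case: ifP => // /Hfar; rewrite ltnNge => /negbTE ->.
by apply/(relaxed_happy_seg_embed x Hcov Hlab).
Qed.

Definition seg_glue (lam : 'I_n -> option Gamma) (mu : 'I_m -> option Gamma)
    (u : 'I_n) : option Gamma :=
  if [pick k | seg_embed k == u] is Some k then
    if seg_cut k then lam u else mu k
  else lam u.

Lemma seg_glue_embed lam mu j :
  seg_glue lam mu (seg_embed j) = if seg_cut j then lam (seg_embed j) else mu j.
Proof.
rewrite /seg_glue; case: pickP => [k /eqP /seg_embed_inj -> //|].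
by move/(_ j); rewrite eqxx.
Qed.

Lemma seg_glue_cases lam mu u :
  seg_glue lam mu u = lam u \/
  exists j, [/\ seg_embed j = u, ~~ seg_cut j & seg_glue lam mu u = mu j].
Proof.
rewrite /seg_glue; case: pickP => [k /eqP Hk|]; last by left.
by case: ifP => Hc; [left | right; exists k; rewrite Hc].
Qed.

Lemma relaxed_accepts_seg_glue x lam mu :
  relaxed_accepts r psi x lam ->
  relaxed_accepts r psi (x \o seg_embed) mu ->
  (forall j c, seg_cut c -> pdist j c <= 2 * r -> mu j = seg_restrict lam j) ->
  relaxed_accepts r psi x (seg_glue lam mu).
Proof.
move=> Hacc Hmu Hnear w.
pose inner u := [exists k, (seg_embed k == u) && ~~ seg_cut k].
case: (boolP [forall u, (pdist u w <= r) ==> inner u]) => [/forallP Hin|].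
  have Hinner w' : pdist w' w <= r -> exists2 k, seg_embed k = w' & ~~ seg_cut k.
    by move/(implyP (Hin w'))/existsP => [k /andP[/eqP]]; exists k.
  have [i Hi _] : exists2 i, seg_embed i = w & ~~ seg_cut i.
    by apply: Hinner; rewrite /pdist subnn.
  subst w.
  have Hcov w' : pdist w' (seg_embed i) <= r -> exists k, seg_embed k = w'.
    by move=> Hw; have [k <- _] := Hinner w' Hw; exists k.
  have Hlab j : pdist j i <= r -> mu j = seg_glue lam mu (seg_embed j).
    move=> Hj; have [k /seg_embed_inj -> Hk] : exists2 k, seg_embed k = seg_embed j & ~~ seg_cut k.
      by apply: Hinner; rewrite pdist_seg_embed.
    by rewrite seg_glue_embed (negbTE Hk).
  exact/(relaxed_happy_seg_embed x Hcov Hlab).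
case/forallPn => u0; rewrite negb_imply => /andP[Hu0 /existsPn Hout].
apply: relaxed_happy_ball_eq (Hacc w) => u Hu.
have [//|[j [Hj Hjc ->]]] := seg_glue_cases lam mu u.
have Hcut k : seg_embed k = u0 -> seg_cut k.
  by move=> Hk; move: (Hout k); rewrite Hk eqxx /= negbK.
have [c Hc Hjc0] := seg_cut_near j Hcut.
rewrite (Hnear j c) // /seg_restrict ?(negbTE Hjc) ?Hj //.
by apply: leq_trans Hjc0 _; move: Hu Hu0; rewrite Hj /pdist; lia.
Qed.

Lemma is_mend_seg_glue x lam mu (i : 'I_m) t d :
  relaxed_accepts r psi x lam ->
  is_mend r psi (x \o seg_embed) (seg_restrict lam) mu i t ->
  (forall j c, seg_cut c -> pdist j i <= t -> 2 * r < pdist j c) ->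
  (forall j, pdist (seg_embed j) (seg_embed i) <= d) ->
  is_mend r psi x lam (seg_glue lam mu) (seg_embed i) d.
Proof.
move=> Hacc [Hmu Hmi Hnone Hchg] Hfar Hd.
have Hnear j c : seg_cut c -> pdist j c <= 2 * r -> mu j = seg_restrict lam j.
  move=> Hc; apply: contraTeq => /eqP /Hchg /(Hfar j c Hc).
  by rewrite ltnNge.
have Hi : ~~ seg_cut i.
  by apply/negP => /(Hfar i i); rewrite /pdist subnn => /(_ (leq0n t)).
split.
- exact: relaxed_accepts_seg_glue.
- by rewrite seg_glue_embed (negbTE Hi).
- move=> u; case: (seg_glue_cases lam mu u) => [-> //|[j [<- Hj ->]] /Hnone].
  by rewrite /seg_restrict (negbTE Hj).
- by move=> u; case: (seg_glue_cases lam mu u) => [-> //|[j [<- _ _]] _].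
Qed.

End SegmentLabelings.

End PathSegment.

Lemma verifier_mendable_const (Sigma : Type) (Gamma : eqType) (r : nat)
    (psi : verifier Sigma Gamma) (T : nat -> nat) (N L : nat) :
  local_verifier r psi ->
  (forall m, N <= m -> 4 * T m <= m) -> N + 4 * r < L ->
  verifier_mendable r psi T -> verifier_mendable r psi (fun _ => L).
Proof.
move=> Hloc HT HL Hm n x lam v Hacc.
have Hv := ltn_ord v.
pose a := v - L; pose m := minn (v + L).+1 n - a.
have Ham : a + m <= n by rewrite /m /a; lia.
have Hi : v - a < m by rewrite /m /a; lia.
have <- : seg_embed Ham (Ordinal Hi) = v by apply: val_inj; rewrite /= subnKC ?leq_subr.
have [mu Hmu] := Hm _ _ _ (Ordinal Hi) (relaxed_accepts_seg_restrict Ham Hloc Hacc).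
exists (seg_glue Ham lam mu); apply: (is_mend_seg_glue Hloc Hacc Hmu).
- (* A cut end lies at distance L from v and forces N <= L < m <= 2L + 1. *)
  move=> j c; rewrite /seg_cut /pdist /= => Hc Hj.
  have HNm : N <= m by move: Hc; rewrite /m /a; lia.
  by have := HT m HNm; move: Hc Hj; rewrite /m /a; have := ltn_ord j; have := ltn_ord c; lia.
- by move=> j; rewrite /pdist /=; have := ltn_ord j; rewrite /m /a; lia.
Qed.

Theorem corollary8p3 (Sigma Gamma : finType) (r : nat)
  (psi : verifier Sigma Gamma) (Hloc : local_verifier r psi)
  (T : nat -> nat) (HT : little_o_n T)
  (Hmend : problem_mendable r psi T) :
  exists c : nat, problem_mendable r psi (fun _ => c).
Proof.
have [psi' [Hloc' Hsame Hmend']] := Hmend.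
have [N HN] := HT 4 isT.
exists (N + 4 * r).+1, psi'; split=> //.
exact: verifier_mendable_const Hloc' HN (ltnSn _) Hmend'.
Qed.
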